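(* Let $a,b,\epsilon>0$ and let $n,U,d,m$ be positive integers. Let $X\in\mathbb{R}^{n\times U\times d}$ satisfy $\|X_{i,u,\cdot}\|_2\le b$ for all $i\in\{1,\dots,n\}$, $u\in\{1,\dots,U\}$, and let $M\in\mathbb{R}^{d\times m}$ be any fixed matrix. Then $$\log\mathcal{N}\Big(\{XA:\ A\in\mathbb{R}^{d\times m},\ \|A-M\|_{2,1}\le a\},\ \epsilon,\ \|\cdot\|_{*}\Big)\ \le\ \frac{64a^2b^2}{\epsilon^2}\log_2\!\Big[\Big(\frac{8ab}{\epsilon}+7\Big)mnU\Big],$$ where for $Y\in\mathbb{R}^{n\times U\times m}$, $\|Y\|_*=\max_{i\le n}\max_{u\le U}\big(\sum_{k=1}^m Y_{i,u,k}^2\big)^{1/2}$.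
   Context: For $X\in\mathbb{R}^{n\times U\times d}$ and $A\in\mathbb{R}^{d\times m}$, $XA\in\mathbb{R}^{n\times U\times m}$ is defined by $(XA)_{i,u,j}=\sum_{o=1}^d X_{i,u,o}A_{o,j}$. For $B\in\mathbb{R}^{d\times m}$, $\|B\|_{2,1}=\sum_{j=1}^m\|B_{\cdot,j}\|_2$ (sum over the $m$ columns/output channels of their Euclidean norms). For a subset $V$ of a normed space $(\mathbb{R}^N,\|\cdot\|)$, the covering number $\mathcal{N}(V,\epsilon,\|\cdot\|)$ is the minimum cardinality $k$ of a collection $v^1,\dots,v^k\in\mathbb{R}^N$ with $\sup_{v\in V}\min_j\|v-v^j\|\le\epsilon$. $\log$ denotes the natural logarithm. *)

(* classical reals. Indices are 0-based: i < n, u < U, o < d, j < m. *)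
From Stdlib Require Import Reals List.
Import ListNotations.
Open Scope R_scope.

Definition sumR (N : nat) (f : nat -> R) : R :=
  fold_right Rplus 0 (map f (seq 0 N)).

(* Finite max over indices 0..N-1 of nonnegative quantities (0 if N = 0) *)
Definition maxR (N : nat) (f : nat -> R) : R :=
  fold_right Rmax 0 (map f (seq 0 N)).

Definition tensor3 := nat -> nat -> nat -> R.
Definition mat := nat -> nat -> R.

Definition tmul (d : nat) (X : tensor3) (A : mat) : tensor3 :=
  fun i u j => sumR d (fun o => X i u o * A o j).

Definition mat_sub (A B : mat) : mat := fun o j => A o j - B o j.
Definition t3_sub (Y Z : tensor3) : tensor3 := fun i u k => Y i u k - Z i u k.

Definition norm21 (d m : nat) (B : mat) : R :=
  sumR m (fun j => sqrt (sumR d (fun o => (B o j)^2))).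

Definition norm_star (n U m : nat) (Y : tensor3) : R :=
  maxR n (fun i => maxR U (fun u => sqrt (sumR m (fun k => (Y i u k)^2)))).

Definition has_cover (n U m : nat) (V : tensor3 -> Prop) (eps : R) (k : nat) : Prop :=
  exists cs : list tensor3, length cs = k /\
    forall Y, V Y -> exists c, In c cs /\ norm_star n U m (t3_sub Y c) <= eps.

Definition is_covering_number (n U m : nat) (V : tensor3 -> Prop) (eps : R) (N : nat) : Prop :=
  has_cover n U m V eps N /\ forall k, has_cover n U m V eps k -> (N <= k)%nat.

Definition log2 (x : R) : R := ln x / ln 2.

Definition linclass (d m : nat) (X : tensor3) (M : mat) (a : R) : tensor3 -> Prop :=
  fun Y => exists A : mat, norm21 d m (mat_sub A M) <= a /\ Y = tmul d X A.

From Stdlib Require Import Reals List Lra Lia Psatz Classical ZArith Wf_nat.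
Import ListNotations.
Open Scope R_scope.

(* Proof strategy: a greedy (Maurey-type) sparsification argument.
   Fix A with ||A - M||_{2,1} <= a, let w_k be the Euclidean norm of column k
   of A - M, and round w_k / a up to a weight om_k on the grid {l/m : 1 <= l <= m+1};
   then sum_k om_k <= 2.  Starting from C = M we repeatedly add a "step"
   c * X_{i,u,.} e_k^T with c = +-(eps/(2b^2)) sqrt(om_k), taken from a finite
   dictionary of 2 n U m (m+1) matrices.  While XC is not eps-close to XA in
   ||.||_*, some step decreases the potential sum_k |(A-C)_{.k}|^2 / om_k,
   which starts below a^2, by at least eps^2/(4b^2).  Hence after
   K ~ 4a^2b^2/eps^2 steps XC is eps-close to XA, so the matrices X(M + at most
   K dictionary steps), at most (1 + 2nUm(m+1))^K of them, form an eps-cover. *)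

Lemma fold_plus_shift l z : fold_right Rplus z l = fold_right Rplus 0 l + z.
Proof. induction l as [|x l IH]; simpl; [lra | rewrite IH; lra]. Qed.

Lemma sumR_S N f : sumR (S N) f = sumR N f + f N.
Proof.
  unfold sumR. rewrite seq_S, map_app, fold_right_app. simpl.
  rewrite fold_plus_shift. lra.
Qed.

Lemma sumR_ext N f g : (forall k, (k < N)%nat -> f k = g k) -> sumR N f = sumR N g.
Proof.
  induction N as [|N IH]; intros H; [reflexivity|].
  rewrite !sumR_S, IH by (intros; apply H; lia). rewrite H by lia. reflexivity.
Qed.

Lemma sumR_le N f g : (forall k, (k < N)%nat -> f k <= g k) -> sumR N f <= sumR N g.
Proof.
  induction N as [|N IH]; intros H; [unfold sumR; simpl; lra|].
  rewrite !sumR_S. apply Rplus_le_compat; [apply IH; intros|]; apply H; lia.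
Qed.

Lemma sumR_plus N f g : sumR N (fun k => f k + g k) = sumR N f + sumR N g.
Proof. induction N; [unfold sumR; simpl; lra|]. rewrite !sumR_S, IHN. lra. Qed.

Lemma sumR_minus N f g : sumR N (fun k => f k - g k) = sumR N f - sumR N g.
Proof. induction N; [unfold sumR; simpl; lra|]. rewrite !sumR_S, IHN. lra. Qed.

Lemma sumR_scal N c f : sumR N (fun k => c * f k) = c * sumR N f.
Proof. induction N; [unfold sumR; simpl; lra|]. rewrite !sumR_S, IHN. lra. Qed.

Lemma sumR_const N c : sumR N (fun _ => c) = INR N * c.
Proof. induction N; [unfold sumR; simpl; lra|]. rewrite !sumR_S, IHN, S_INR. lra. Qed.

Lemma sumR_nonneg N f : (forall k, (k < N)%nat -> 0 <= f k) -> 0 <= sumR N f.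
Proof.
  intros H. replace 0 with (sumR N (fun _ => 0)) by (rewrite sumR_const; lra).
  now apply sumR_le.
Qed.

Lemma sumR_single N k v :
  (k < N)%nat -> sumR N (fun j => if Nat.eq_dec j k then v else 0) = v.
Proof.
  induction N as [|N IH]; intros Hk; [lia|]. rewrite sumR_S.
  destruct (Nat.eq_dec N k) as [->|Hne]; [|rewrite IH by lia; lra].
  rewrite (sumR_ext _ _ (fun _ => 0)), sumR_const; [lra|].
  intros j Hj. destruct (Nat.eq_dec j k); [lia | reflexivity].
Qed.

Lemma sumR_ge_term N f k :
  (forall j, (j < N)%nat -> 0 <= f j) -> (k < N)%nat -> f k <= sumR N f.
Proof.
  intros H Hk. rewrite <- (sumR_single N k (f k)) by exact Hk. apply sumR_le.
  intros j Hj. destruct (Nat.eq_dec j k) as [->|]; [lra | now apply H].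
Qed.

Lemma sumR_lt_exists N f g :
  sumR N f < sumR N g -> exists k, (k < N)%nat /\ f k < g k.
Proof.
  induction N as [|N IH]; intros H; [unfold sumR in H; simpl in H; lra|].
  rewrite !sumR_S in H. destruct (Rlt_dec (f N) (g N)) as [Hlt|Hge].
  - exists N. split; [lia | exact Hlt].
  - destruct IH as [k [Hk Hfg]]; [lra|]. exists k. split; [lia | exact Hfg].
Qed.

Lemma maxR_le N f e : 0 <= e -> (forall i, (i < N)%nat -> f i <= e) -> maxR N f <= e.
Proof.
  intros He H. unfold maxR.
  assert (Hin : forall x, In x (map f (seq 0 N)) -> x <= e).
  { intros x Hx. apply in_map_iff in Hx as [i [<- Hi]]. apply in_seq in Hi. apply H; lia. }
  induction (map f (seq 0 N)) as [|x l IH]; simpl; [exact He|].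
  apply Rmax_lub; [apply Hin; left | apply IH; intros; apply Hin; right]; auto.
Qed.

Lemma tmul_sub d X A C i u k :
  tmul d X A i u k - tmul d X C i u k = sumR d (fun o => X i u o * (A o k - C o k)).
Proof. unfold tmul. rewrite <- sumR_minus. apply sumR_ext; intros; ring. Qed.

Lemma sq_lt_of_lt_sqrt G e : 0 <= e -> e < sqrt G -> e ^ 2 < G.
Proof. intros He H. rewrite <- (sqrt_pow2 e He) in H. exact (sqrt_lt_0_alt _ _ H). Qed.

Lemma sq_le_of_sqrt_le G b : 0 <= G -> sqrt G <= b -> G <= b ^ 2.
Proof. intros HG H. rewrite <- (pow2_sqrt G HG). apply pow_incr. split; [apply sqrt_pos | exact H]. Qed.

Lemma ln_le x y : 0 < x -> x <= y -> ln x <= ln y.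
Proof. intros Hx [Hlt | ->]; [left; now apply ln_increasing | lra]. Qed.

Lemma up_nat y : 0 <= y -> exists l : nat, INR l = IZR (up y) /\ y < INR l <= y + 1.
Proof.
  intros Hy. destruct (archimed y) as [H1 H2].
  assert (Hpos : (0 <= up y)%Z) by (apply le_IZR; lra).
  exists (Z.to_nat (up y)).
  rewrite INR_IZR_INZ, Z2Nat.id by exact Hpos. split; [reflexivity | lra].
Qed.

Definition madd (C D : mat) : mat := fun o k => C o k + D o k.

Fixpoint sums_upto (C0 : mat) (st : list mat) (K : nat) : list mat :=
  match K with
  | O => [C0]
  | S K' => sums_upto C0 st K'
            ++ flat_map (fun c => map (madd c) st) (sums_upto C0 st K')
  end.

Lemma sums_upto_length C0 st K : length (sums_upto C0 st K) = ((1 + length st) ^ K)%nat.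
Proof.
  induction K as [|K IH]; simpl; [reflexivity|].
  rewrite length_app, (flat_map_constant_length (c := length st)), IH
    by (intros; apply length_map).
  simpl. lia.
Qed.

Lemma sums_upto_mono C0 st j j' C :
  In C (sums_upto C0 st j) -> (j <= j')%nat -> In C (sums_upto C0 st j').
Proof. intros H Hj. induction Hj; [exact H | simpl; apply in_or_app; left; exact IHHj]. Qed.

Lemma greedy_descent (P : mat -> R) (D : mat -> Prop) st C0 delta :
  0 < delta -> (forall C, 0 <= P C) ->
  (forall C, ~ D C -> exists s, In s st /\ P (madd C s) <= P C - delta) ->
  forall K j C, In C (sums_upto C0 st j) -> P C < delta * (INR K + 1) ->
  exists C', In C' (sums_upto C0 st (j + K)) /\ D C'.
Proof.
  intros Hd Hnn Hstep. induction K as [|K IH]; intros j C HC HP;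
    (destruct (classic (D C)) as [HD|HD];
     [exists C; split; [apply (sums_upto_mono _ _ j); [exact HC | lia] | exact HD]|]);
    destruct (Hstep C HD) as [s [Hs HPs]].
  - specialize (Hnn (madd C s)). simpl in HP. lra.
  - replace (j + S K)%nat with (S j + K)%nat by lia. apply (IH (S j) (madd C s)).
    + simpl. apply in_or_app. right. apply in_flat_map. exists C. split; [exact HC|].
      now apply in_map.
    + rewrite S_INR in HP. lra.
Qed.

Definition step_mat (X : tensor3) i u k (c : R) : mat :=
  fun o k' => if Nat.eq_dec k' k then c * X i u o else 0.

Definition step_coefs th m : list R :=
  flat_map (fun l => [th * sqrt (INR l / INR m); - (th * sqrt (INR l / INR m))]) (seq 1 (S m)).

Definition dictionary (X : tensor3) n U m th : list mat :=
  flat_map (fun i => flat_map (fun u => flat_map (fun k =>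
     map (step_mat X i u k) (step_coefs th m)) (seq 0 m)) (seq 0 U)) (seq 0 n).

Lemma dictionary_length X n U m th :
  length (dictionary X n U m th) = (n * (U * (m * (S m * 2))))%nat.
Proof.
  unfold dictionary.
  rewrite (flat_map_constant_length (c := (U * (m * (S m * 2)))%nat)); [now rewrite length_seq|].
  intros i _. rewrite (flat_map_constant_length (c := (m * (S m * 2))%nat)); [now rewrite length_seq|].
  intros u _. rewrite (flat_map_constant_length (c := (S m * 2)%nat)); [now rewrite length_seq|].
  intros k _. rewrite length_map. unfold step_coefs.
  rewrite (flat_map_constant_length (c := 2%nat)); [now rewrite length_seq | reflexivity].
Qed.

Lemma dictionary_in X n U m th i u k l c :
  (i < n)%nat -> (u < U)%nat -> (k < m)%nat -> (1 <= l <= S m)%nat ->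
  (c = th * sqrt (INR l / INR m) \/ c = - (th * sqrt (INR l / INR m))) ->
  In (step_mat X i u k c) (dictionary X n U m th).
Proof.
  intros Hi Hu Hk Hl Hc. unfold dictionary.
  apply in_flat_map. exists i. split; [apply in_seq; lia|].
  apply in_flat_map. exists u. split; [apply in_seq; lia|].
  apply in_flat_map. exists k. split; [apply in_seq; lia|].
  apply in_map. apply in_flat_map. exists l. split; [apply in_seq; lia|].
  destruct Hc as [-> | ->]; simpl; auto.
Qed.

Definition potential d m (om : nat -> R) (E : mat) : R :=
  sumR m (fun k => sumR d (fun o => (E o k) ^ 2) / om k).

Lemma potential_step d m om (A C : mat) X i u k c : (k < m)%nat ->
  potential d m om (mat_sub A (madd C (step_mat X i u k c))) =
  potential d m om (mat_sub A C) +
  (-2 * c * sumR d (fun o => X i u o * mat_sub A C o k)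
   + c ^ 2 * sumR d (fun o => (X i u o) ^ 2)) / om k.
Proof.
  intros Hk. unfold potential.
  set (delta := (-2 * c * sumR d (fun o => X i u o * mat_sub A C o k)
                 + c ^ 2 * sumR d (fun o => (X i u o) ^ 2)) / om k).
  rewrite <- (sumR_single m k delta Hk), <- sumR_plus. apply sumR_ext. intros k' _.
  unfold delta, mat_sub, madd, step_mat. destruct (Nat.eq_dec k' k) as [->|_].
  - rewrite (sumR_ext _ _ (fun o => ((A o k - C o k) ^ 2
        + (-2 * c) * (X i u o * (A o k - C o k))) + c ^ 2 * (X i u o) ^ 2))
      by (intros; ring).
    rewrite !sumR_plus, !sumR_scal. unfold Rdiv. ring.
  - rewrite Rplus_0_r. f_equal. apply sumR_ext. intros; ring.
Qed.

Lemma signed_step_decrease g w x b e th :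
  0 < w -> 0 < e -> th * (2 * b ^ 2) = e -> 0 <= x <= b ^ 2 -> w * e ^ 2 / 2 < g ^ 2 ->
  exists c, (c = th * sqrt w \/ c = - (th * sqrt w)) /\
            (-2 * c * g + c ^ 2 * x) / w <= - (th * e / 2).
Proof.
  intros Hw He Hth Hx Hg.
  assert (Hr : 0 < sqrt w) by now apply sqrt_lt_R0.
  assert (Hrr : sqrt w * sqrt w = w) by (apply sqrt_sqrt; lra).
  set (r := sqrt w) in *.
  assert (Hth0 : 0 < th) by nra.
  assert (Hquad : th * th * w * x <= th * w * (e / 2)).
  { assert (th * th * w * x <= th * th * w * b ^ 2) by (apply Rmult_le_compat_l; nra). nra. }
  assert (Hgabs : r * e / 2 < Rabs g).
  { apply Rnot_le_lt. intros Hle. pose proof (Rabs_pos g).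
    assert (Rabs g ^ 2 <= (r * e / 2) ^ 2) by (apply pow_incr; lra).
    rewrite pow2_abs in *. nra. }
  assert (Hbest : forall c, c * g = th * r * Rabs g -> c ^ 2 = th ^ 2 * w ->
                  (-2 * c * g + c ^ 2 * x) / w <= - (th * e / 2)).
  { intros c Hcg Hc2. apply (Rmult_le_reg_r w); [exact Hw|].
    unfold Rdiv. rewrite Rmult_assoc, Rinv_l, Rmult_1_r by lra.
    assert (Hlin : th * w * e / 2 < th * r * Rabs g).
    { assert (th * r * (r * e / 2) < th * r * Rabs g) by (apply Rmult_lt_compat_l; nra).
      rewrite <- Hrr. lra. }
    replace (-2 * c * g + c ^ 2 * x) with (-2 * (c * g) + c ^ 2 * x) by ring.
    rewrite Hcg, Hc2. lra. }
  destruct (Rle_lt_dec 0 g) as [Hg0|Hg0].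
  - exists (th * r). split; [now left | apply Hbest; [rewrite Rabs_pos_eq|]; nra].
  - exists (- (th * r)). split; [now right | apply Hbest; [rewrite Rabs_left|]; nra].
Qed.

Definition rounded_weight (m : nat) (a w : R) : R := IZR (up (INR m * w / a)) / INR m.

Lemma rounded_weight_facts m a w : (0 < m)%nat -> 0 < a -> 0 <= w <= a ->
  let om := rounded_weight m a w in
  0 < om /\ w <= a * om /\ om <= w / a + / INR m /\
  exists l, (1 <= l <= S m)%nat /\ om = INR l / INR m.
Proof.
  intros Hm Ha Hw om.
  assert (HmR : 0 < INR m) by now apply lt_0_INR.
  assert (Hy : 0 <= INR m * w / a <= INR m).
  { split; [apply Rmult_le_pos, Rlt_le, Rinv_0_lt_compat; nra|].
    apply (Rmult_le_reg_r a); [exact Ha|]. unfold Rdiv.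
    rewrite Rmult_assoc, Rinv_l, Rmult_1_r by lra. nra. }
  destruct (up_nat _ (proj1 Hy)) as [l [Hl [Hlo Hhi]]].
  assert (Hom : om = INR l / INR m) by (unfold om, rounded_weight; now rewrite Hl).
  rewrite Hom. repeat split.
  - apply Rdiv_lt_0_compat; lra.
  - apply (Rmult_le_reg_r (INR m)); [exact HmR|].
    replace (a * (INR l / INR m) * INR m) with (a * INR l) by (field; lra).
    replace (INR m * w / a) with (w * INR m / a) in Hlo by (field; lra).
    apply (Rmult_lt_compat_l a) in Hlo; [|exact Ha].
    replace (a * (w * INR m / a)) with (w * INR m) in Hlo by (field; lra). lra.
  - apply (Rmult_le_reg_r (INR m)); [exact HmR|].
    replace (INR l / INR m * INR m) with (INR l) by (field; lra).
    replace ((w / a + / INR m) * INR m) with (INR m * w / a + 1) by (field; lra). lra.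
  - exists l. split; [split|reflexivity].
    + assert (0 < l)%nat by (apply INR_lt; simpl; lra). lia.
    + apply INR_le. rewrite S_INR. lra.
Qed.

Section FixedTarget.

Variables (a b eps : R) (n U d m : nat) (X : tensor3) (M A : mat).
Hypotheses (Ha : 0 < a) (Hb : 0 < b) (He : 0 < eps) (Hm : (0 < m)%nat).
Hypothesis HX : forall i u, (i < n)%nat -> (u < U)%nat ->
  sqrt (sumR d (fun o => (X i u o) ^ 2)) <= b.
Hypothesis HA : norm21 d m (mat_sub A M) <= a.

Definition col_dev (k : nat) : R := sqrt (sumR d (fun o => (mat_sub A M o k) ^ 2)).
Definition weight (k : nat) : R := rounded_weight m a (col_dev k).
Definition pot (C : mat) : R := potential d m weight (mat_sub A C).

Definition residual (C : mat) (i u k : nat) : R := sumR d (fun o => X i u o * mat_sub A C o k).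
Definition close (C : mat) : Prop := forall i u, (i < n)%nat -> (u < U)%nat ->
  sqrt (sumR m (fun k => (residual C i u k) ^ 2)) <= eps.

Lemma weight_facts k : (k < m)%nat ->
  0 < weight k /\ col_dev k <= a * weight k /\ weight k <= col_dev k / a + / INR m /\
  exists l, (1 <= l <= S m)%nat /\ weight k = INR l / INR m.
Proof.
  intros Hk. apply rounded_weight_facts; [exact Hm | exact Ha|].
  split; [apply sqrt_pos|]. apply Rle_trans with (2 := HA).
  apply (sumR_ge_term m col_dev); [intros; apply sqrt_pos | exact Hk].
Qed.

(* The weights have total mass at most 2: 1 from the norms, 1 from rounding. *)
Lemma weight_sum : sumR m weight <= 2.
Proof.
  apply Rle_trans with (sumR m (fun k => / a * col_dev k + / INR m)).
  { apply sumR_le. intros k Hk. destruct (weight_facts k Hk) as [_ [_ [H _]]].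
    unfold Rdiv in H. lra. }
  assert (HmR : 0 < INR m) by now apply lt_0_INR.
  rewrite sumR_plus, sumR_scal, sumR_const.
  assert (/ a * sumR m col_dev <= / a * a) by (apply Rmult_le_compat_l; [left; now apply Rinv_0_lt_compat | exact HA]).
  replace (/ a * a) with 1 in * by (field; lra).
  replace (INR m * / INR m) with 1 by (field; lra). lra.
Qed.

Lemma pot_nonneg C : 0 <= pot C.
Proof.
  apply sumR_nonneg. intros k Hk. destruct (weight_facts k Hk) as [Hw _].
  apply Rmult_le_pos; [apply sumR_nonneg; intros; apply pow2_ge_0 | left; now apply Rinv_0_lt_compat].
Qed.

(* Since col_dev k <= a weight k, the initial potential is at most a^2. *)
Lemma pot_init : pot M <= a ^ 2.
Proof.
  apply Rle_trans with (sumR m (fun k => a * col_dev k)).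
  - apply sumR_le. intros k Hk. destruct (weight_facts k Hk) as [Hw [Hdev _]].
    assert (Hsq : sumR d (fun o => (mat_sub A M o k) ^ 2) = col_dev k * col_dev k).
    { unfold col_dev. rewrite sqrt_sqrt; [reflexivity|]. apply sumR_nonneg; intros; apply pow2_ge_0. }
    rewrite Hsq. pose proof (sqrt_pos (sumR d (fun o => (mat_sub A M o k) ^ 2))).
    apply (Rmult_le_reg_r (weight k)); [exact Hw|]. unfold Rdiv.
    rewrite Rmult_assoc, Rinv_l, Rmult_1_r by lra. fold (col_dev k) in *. nra.
  - rewrite sumR_scal.
    assert (a * sumR m col_dev <= a * a) by (apply Rmult_le_compat_l; [lra | exact HA]).
    simpl. lra.
Qed.

(* If XC is not eps-close, some coordinate (i, u, k) carries a residual that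
   is large relative to its weight (pigeonhole against weight_sum). *)
Lemma far_coordinate C : ~ close C ->
  exists i u k, (i < n)%nat /\ (u < U)%nat /\ (k < m)%nat /\
                weight k * eps ^ 2 / 2 < (residual C i u k) ^ 2.
Proof.
  intros Hfar.
  destruct (classic (exists i u, (i < n)%nat /\ (u < U)%nat /\
              eps < sqrt (sumR m (fun k => (residual C i u k) ^ 2)))) as [[i [u [Hi [Hu Hgt]]]]|Hno].
  - apply sq_lt_of_lt_sqrt in Hgt; [|lra].
    assert (Hmass : sumR m (fun k => weight k * eps ^ 2 / 2) <= eps ^ 2).
    { rewrite (sumR_ext _ _ (fun k => eps ^ 2 / 2 * weight k)) by (intros; unfold Rdiv; ring).
      rewrite sumR_scal. pose proof weight_sum. nra. }
    destruct (sumR_lt_exists m (fun k => weight k * eps ^ 2 / 2) (fun k => (residual C i u k) ^ 2))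
      as [k [Hk Hlt]]; [lra|].
    exists i, u, k. auto.
  - exfalso. apply Hfar. intros i u Hi Hu. apply Rnot_lt_le. intros Hgt.
    apply Hno. exists i, u. auto.
Qed.

Lemma improving_step C : ~ close C ->
  exists s, In s (dictionary X n U m (eps / (2 * b ^ 2))) /\
            pot (madd C s) <= pot C - eps ^ 2 / (4 * b ^ 2).
Proof.
  intros Hfar. destruct (far_coordinate C Hfar) as [i [u [k [Hi [Hu [Hk Hbig]]]]]].
  destruct (weight_facts k Hk) as [Hw [_ [_ [l [Hl Hwl]]]]].
  set (th := eps / (2 * b ^ 2)).
  assert (Hth : th * (2 * b ^ 2) = eps) by (unfold th; field; lra).
  assert (Hx : 0 <= sumR d (fun o => (X i u o) ^ 2) <= b ^ 2).
  { assert (Hnn : 0 <= sumR d (fun o => (X i u o) ^ 2)) by (apply sumR_nonneg; intros; apply pow2_ge_0).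
    split; [exact Hnn | apply sq_le_of_sqrt_le; [exact Hnn | now apply HX]]. }
  destruct (signed_step_decrease (residual C i u k) (weight k) _ b eps th Hw He Hth Hx Hbig)
    as [c [Hc Hdec]].
  exists (step_mat X i u k c). split.
  - apply dictionary_in with (l := l); [exact Hi | exact Hu | exact Hk | exact Hl | now rewrite <- Hwl].
  - unfold pot. rewrite potential_step by exact Hk. fold (pot C).
    replace (eps ^ 2 / (4 * b ^ 2)) with (th * eps / 2) by (unfold th; field; lra).
    unfold residual in Hdec. lra.
Qed.

End FixedTarget.

Lemma greedy_cover a b eps n U d m X M K :
  0 < a -> 0 < b -> 0 < eps -> (0 < m)%nat ->
  (forall i u, (i < n)%nat -> (u < U)%nat -> sqrt (sumR d (fun o => (X i u o) ^ 2)) <= b) ->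
  a ^ 2 < eps ^ 2 / (4 * b ^ 2) * (INR K + 1) ->
  has_cover n U m (linclass d m X M a) eps ((1 + n * (U * (m * (S m * 2)))) ^ K).
Proof.
  intros Ha Hb He Hm HX HK.
  set (st := dictionary X n U m (eps / (2 * b ^ 2))).
  exists (map (tmul d X) (sums_upto M st K)). split.
  { rewrite length_map, sums_upto_length. unfold st. now rewrite dictionary_length. }
  intros Y [A [HA ->]].
  assert (Hgain : 0 < eps ^ 2 / (4 * b ^ 2)) by (apply Rdiv_lt_0_compat; nra).
  destruct (greedy_descent (pot a d m M A) (close eps n U d m X A) st M _ Hgain
              (pot_nonneg a d m M A Ha Hm HA)
              (improving_step a b eps n U d m X M A Ha Hb He Hm HX HA) K 0 M)
    as [C [HC Hclose]].
  - now left.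
  - pose proof (pot_init a d m M A Ha Hm HA). lra.
  - exists (tmul d X C). split; [now apply in_map|].
    unfold norm_star. apply maxR_le; [lra|]. intros i Hi. apply maxR_le; [lra|]. intros u Hu.
    rewrite (sumR_ext m _ (fun k => (residual d X A C i u k) ^ 2))
      by (intros; unfold t3_sub; now rewrite tmul_sub).
    now apply Hclose.
Qed.

Lemma covering_number_exists n U m V eps k :
  has_cover n U m V eps k -> exists N, is_covering_number n U m V eps N /\ (N <= k)%nat.
Proof.
  intros Hk.
  destruct (dec_inh_nat_subset_has_unique_least_element (has_cover n U m V eps))
    as [N [[HN Hmin] _]]; [intros j; apply classic | now exists k|].
  exists N. split; [split; [exact HN | exact Hmin] | now apply Hmin].
Qed.

Lemma cover_size_pos n U m (V : tensor3 -> Prop) eps k Y :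
  V Y -> has_cover n U m V eps k -> (1 <= k)%nat.
Proof.
  intros HY [cs [Hlen Hcov]]. destruct (Hcov Y HY) as [c [Hc _]].
  destruct cs; [destruct Hc | simpl in Hlen; lia].
Qed.

Lemma steps_budget a b eps : 0 < b -> 0 < eps ->
  exists K : nat, a ^ 2 < eps ^ 2 / (4 * b ^ 2) * (INR K + 1) /\
                  INR K <= 4 * (a ^ 2 * b ^ 2 / eps ^ 2).
Proof.
  intros Hb He. set (y := 4 * (a ^ 2 * b ^ 2 / eps ^ 2)).
  assert (Hy : 0 <= y).
  { unfold y. apply Rmult_le_pos; [lra|]. apply Rmult_le_pos; [nra | left; apply Rinv_0_lt_compat; nra]. }
  destruct (up_nat y Hy) as [l [_ [Hlo Hhi]]].
  assert (Hl : (1 <= l)%nat) by (assert (0 < l)%nat by (apply INR_lt; simpl; lra); lia).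
  exists (l - 1)%nat. rewrite minus_INR by exact Hl. simpl INR. split; [|lra].
  replace (a ^ 2) with (eps ^ 2 / (4 * b ^ 2) * y) by (unfold y; field; lra).
  apply Rmult_lt_compat_l; [apply Rdiv_lt_0_compat; nra | lra].
Qed.

Lemma dictionary_size_bound n U m : (0 < n)%nat -> (0 < U)%nat -> (0 < m)%nat ->
  (1 + n * (U * (m * (S m * 2))) <= (7 * m * n * U) ^ 2)%nat.
Proof.
  intros Hn HU Hm. set (p := (m * n * U)%nat).
  assert (Hp : (1 <= p)%nat) by (unfold p; nia).
  assert (Hst : (n * (U * (m * (S m * 2))) <= n * (U * (m * (4 * m))))%nat)
    by (repeat apply Nat.mul_le_mono_l; lia).
  assert (HnU : (n * U <= (n * U) * (n * U))%nat) by nia.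
  assert (Hsq : (n * (U * (m * (4 * m))) <= 4 * (p * p))%nat).
  { replace (n * (U * (m * (4 * m))))%nat with (4 * (m * m) * (n * U))%nat by ring.
    replace (4 * (p * p))%nat with (4 * (m * m) * ((n * U) * (n * U)))%nat by (unfold p; ring).
    now apply Nat.mul_le_mono_l. }
  replace ((7 * m * n * U) ^ 2)%nat with (49 * (p * p))%nat by (unfold p; simpl; ring).
  nia.
Qed.

Lemma eight_le_64_div_ln2 : 8 <= 64 / ln 2.
Proof.
  assert (Hlo : / 2 < ln 2) by apply ln_lt_2.
  assert (Hhi : ln 2 < 2).
  { rewrite <- (ln_exp 2) at 2. apply ln_increasing; [lra|]. pose proof (exp_ineq1 2). lra. }
  apply (Rmult_le_reg_r (ln 2)); [lra|]. unfold Rdiv.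
  rewrite Rmult_assoc, Rinv_l, Rmult_1_r; lra.
Qed.

Lemma ln_dictionary_bound a b eps n U m : 0 <= a -> 0 < b -> 0 < eps ->
  (0 < n)%nat -> (0 < U)%nat -> (0 < m)%nat ->
  let Z := (8 * a * b / eps + 7) * INR m * INR n * INR U in
  1 <= Z /\ ln (INR (1 + n * (U * (m * (S m * 2))))) <= 2 * ln Z.
Proof.
  intros Ha Hb He Hn HU Hm Z.
  assert (Hmnu : 1 <= INR m * INR n * INR U).
  { rewrite <- !mult_INR. apply (le_INR 1). nia. }
  assert (Hab : 0 <= 8 * a * b / eps).
  { apply Rmult_le_pos; [nra | left; now apply Rinv_0_lt_compat]. }
  assert (HZ7 : 7 * (INR m * INR n * INR U) <= Z).
  { unfold Z. replace ((8 * a * b / eps + 7) * INR m * INR n * INR U)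
      with ((8 * a * b / eps + 7) * (INR m * INR n * INR U)) by ring.
    apply Rmult_le_compat_r; lra. }
  split; [lra|].
  replace (2 * ln Z) with (INR 2 * ln Z) by (simpl; ring).
  rewrite <- ln_pow by lra. apply ln_le; [apply lt_0_INR; lia|].
  apply Rle_trans with (INR ((7 * m * n * U) ^ 2)); [apply le_INR, dictionary_size_bound; assumption|].
  rewrite pow_INR, !mult_INR. replace (INR 7) with 7 by (simpl; ring).
  replace (7 * INR m * INR n * INR U) with (7 * (INR m * INR n * INR U)) by ring.
  apply pow_incr. lra.
Qed.

(* The counting estimate: N <= (1 + |st|)^K with K <= 4 a^2 b^2 / eps^2 gives
   ln N <= 8 (a^2 b^2 / eps^2) ln Z <= (64 a^2 b^2 / eps^2) log2 Z. *)
Lemma log_cover_bound a b eps n U m N K : 0 < a -> 0 < b -> 0 < eps ->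
  (0 < n)%nat -> (0 < U)%nat -> (0 < m)%nat ->
  (1 <= N)%nat -> (N <= (1 + n * (U * (m * (S m * 2)))) ^ K)%nat ->
  INR K <= 4 * (a ^ 2 * b ^ 2 / eps ^ 2) ->
  ln (INR N) <= 64 * a ^ 2 * b ^ 2 / eps ^ 2 *
                log2 ((8 * a * b / eps + 7) * INR m * INR n * INR U).
Proof.
  intros Ha Hb He Hn HU Hm HN1 HNle HK.
  destruct (ln_dictionary_bound a b eps n U m) as [HZ1 HlnS]; try assumption; [lra|].
  set (Z := (8 * a * b / eps + 7) * INR m * INR n * INR U) in *.
  set (T := a ^ 2 * b ^ 2 / eps ^ 2) in *.
  assert (HT : 0 <= T) by (unfold T; apply Rmult_le_pos; [nra | left; apply Rinv_0_lt_compat; nra]).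
  assert (HlnZ : 0 <= ln Z) by (rewrite <- ln_1; now apply ln_le; [lra|]).
  assert (HlnN : ln (INR N) <= INR K * (2 * ln Z)).
  { apply Rle_trans with (INR K * ln (INR (1 + n * (U * (m * (S m * 2)))))).
    - rewrite <- ln_pow by (apply lt_0_INR; lia). rewrite <- pow_INR.
      apply ln_le; [apply lt_0_INR; lia | now apply le_INR].
    - apply Rmult_le_compat_l; [apply pos_INR | exact HlnS]. }
  unfold log2. fold Z.
  replace (64 * a ^ 2 * b ^ 2 / eps ^ 2 * (ln Z / ln 2)) with (64 / ln 2 * (T * ln Z))
    by (unfold T; pose proof ln_lt_2; field; lra).
  pose proof eight_le_64_div_ln2.
  assert (INR K * (2 * ln Z) <= 4 * T * (2 * ln Z)) by (apply Rmult_le_compat_r; lra).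
  assert (8 * (T * ln Z) <= 64 / ln 2 * (T * ln Z)) by (apply Rmult_le_compat_r; [nra | lra]).
  lra.
Qed.

Theorem mainTheorem2 (a b eps : R) (n U d m : nat) (X : tensor3) (M : mat) :
  0 < a -> 0 < b -> 0 < eps ->
  (0 < n)%nat -> (0 < U)%nat -> (0 < d)%nat -> (0 < m)%nat ->
  (forall i u, (i < n)%nat -> (u < U)%nat ->
     sqrt (sumR d (fun o => (X i u o)^2)) <= b) ->
  exists N : nat,
    is_covering_number n U m (linclass d m X M a) eps N /\
    ln (INR N) <= 64 * a^2 * b^2 / eps^2 *
                  log2 ((8 * a * b / eps + 7) * INR m * INR n * INR U).
Proof.
  intros Ha Hb He Hn HU Hd Hm HX.
  destruct (steps_budget a b eps Hb He) as [K [HK HKle]].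
  destruct (covering_number_exists _ _ _ _ _ _ (greedy_cover a b eps n U d m X M K Ha Hb He Hm HX HK))
    as [N [HN HNle]].
  exists N. split; [exact HN|].
  apply (log_cover_bound a b eps n U m N K); try assumption.
  apply (cover_size_pos n U m (linclass d m X M a) eps N (tmul d X M)); [|exact (proj1 HN)].
  exists M. split; [|reflexivity].
  unfold norm21. rewrite (sumR_ext m _ (fun _ => 0)), sumR_const; [lra|].
  intros j _. rewrite (sumR_ext d _ (fun _ => 0)), sumR_const, Rmult_0_r; [apply sqrt_0|].
  intros o _. unfold mat_sub. simpl. ring.
Qed.
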